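(* Let $P_n$ be a labeled path such that the number of left-upper corners of its ribbon diagram $RT(P_n)$ differs from the number of right-lower corners of $RT(P_n)$. Then $X(P_n;\mathbf{x},q)$ is not palindromic, and hence not symmetric.
   Context: A labeled path $P_n$ is the path graph with vertices $v_1,\dots,v_n$ (edges $v_iv_{i+1}$) where $v_i$ carries label $\sigma_i$ for a permutation $\sigma$ of $[n]$; vertices are identified with labels. A proper coloring is $c\colon[n]\to\{1,2,\dots\}$ with adjacent vertices colored differently; $\operatorname{asc}(c)=\#\{ij\in E: i<j,\ c(i)<c(j)\}$. The CQF is $X(P_n;\mathbf{x},q)=\sum_{c \text{ proper}} x_{c(1)}\cdots x_{c(n)}q^{\operatorname{asc}(c)}$. It is symmetric if each coefficient of $q^k$ is a symmetric function, and palindromic if the coefficient of $q^k$ equals that of $q^{(n-1)-k}$ for all $k$. The ad-pattern of $P_n$ is $w_1\cdots w_{n-1}$ with $w_i=a$ if $\sigma_i<\sigma_{i+1}$ and $w_i=d$ otherwise. The ribbon diagram $RT(P_n)$ consists of $n$ unit boxes placed in the plane: start with box $1$, and for $i=1,\dots,n-1$ place box $i+1$ immediately to the right of box $i$ if $w_i=a$ and immediately above box $i$ if $w_i=d$. A left-upper (LU) corner is a box with no box immediately to its left and no box immediately above it; a right-lower (RL) corner is a box with no box immediately to its right and no box immediately below it. *)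

From mathcomp Require Import all_boot all_order all_fingroup.
Set Implicit Arguments. Unset Strict Implicit. Unset Printing Implicit Defensive.

(* Labeled path P_n: positions 0..n-1 (v_{i+1} in the paper is position i),
   position i carries label (sigma i) : 'I_n (labels 0..n-1 instead of 1..n;
   only the relative order of labels matters). *)

Section LabeledPath.
Variables (n : nat) (sigma : {perm 'I_n}).

(* label at position i (dummy 0 outside 0..n-1, never used there) *)
Definition lab (i : nat) : nat := oapp (fun j : 'I_n => val (sigma j)) 0 (insub i).

(* ad-pattern letter w_i for i < n-1 : true = 'a', false = 'd' *)
Definition adw (i : nat) : bool := lab i < lab i.+1.

(* ribbon diagram: coordinates of box i (0-indexed); box 0 at (0,0),
   box i+1 right of box i if w_i = a, above box i if w_i = d. *)
Definition bx (i : nat) : nat := \sum_(j < i) (adw j : nat).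
Definition by_ (i : nat) : nat := \sum_(j < i) (~~ adw j : nat).

Definition is_LU (i : 'I_n) : bool :=
  ~~ [exists j : 'I_n, (bx j + 1 == bx i) && (by_ j == by_ i)] &&
  ~~ [exists j : 'I_n, (bx j == bx i) && (by_ j == by_ i + 1)].

Definition is_RL (i : 'I_n) : bool :=
  ~~ [exists j : 'I_n, (bx j == bx i + 1) && (by_ j == by_ i)] &&
  ~~ [exists j : 'I_n, (bx j == bx i) && (by_ j + 1 == by_ i)].

Definition numLU : nat := #|[set i : 'I_n | is_LU i]|.
Definition numRL : nat := #|[set i : 'I_n | is_RL i]|.

(* colorings with colors in 'I_m (color j stands for variable x_{j+1}) *)
Section Colorings.
Variable m : nat.
Implicit Type c : {ffun 'I_n -> 'I_m}.

Definition colof c (l : nat) : nat := oapp (fun j : 'I_n => val (c j)) 0 (insub l).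

Definition proper c : bool :=
  [forall i : 'I_n, (i.+1 < n) ==> (colof c (lab i) != colof c (lab i.+1))].

Definition asc_edge c (i : nat) : bool :=
  ((lab i < lab i.+1) && (colof c (lab i) < colof c (lab i.+1))) ||
  ((lab i.+1 < lab i) && (colof c (lab i.+1) < colof c (lab i))).

Definition asc c : nat := \sum_(i < n | i.+1 < n) (asc_edge c i : nat).
End Colorings.

(* coefficient of x_1^{alpha_0} ... x_m^{alpha_{m-1}} q^k in X(P_n; x, q),
   where m = size alpha. *)
Definition cqf_coef (alpha : seq nat) (k : nat) : nat :=
  #|[set c : {ffun 'I_n -> 'I_(size alpha)} |
      [&& proper c,
          [forall j : 'I_(size alpha), #|[set v | c v == j]| == nth 0 alpha j]
        & asc c == k]]|.

Definition cqf_palindromic : Prop :=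
  forall (alpha : seq nat) (k : nat), k <= n.-1 ->
    cqf_coef alpha k = cqf_coef alpha (n.-1 - k).

(* symmetric: each coefficient of q^k is invariant under permuting variables
   (exponent vectors padded with zeros, so any permutation of variables is
   covered by a permutation of a long enough exponent sequence). *)
Definition cqf_symmetric : Prop :=
  forall (k : nat) (alpha beta : seq nat), perm_eq alpha beta ->
    cqf_coef alpha k = cqf_coef beta k.

End LabeledPath.

From Pilot Require Import Defs.
From mathcomp Require Import all_boot all_order all_fingroup.
From mathcomp Require Import zify.
Set Implicit Arguments. Unset Strict Implicit. Unset Printing Implicit Defensive.

(* A proper colouring all of whose edges are ascents (b = true), resp.
   descents (b = false), increases along edge i exactly when w_i = a, resp. d;
   hence each vertex of minimal colour sits at an LU, resp. RL, corner of the
   ribbon.  Conversely some such colouring gives the lowest colour to every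
   LU, resp. RL, corner.  If, say, there are more LU than RL corners, the
   content of the all-ascent colouring of this kind has a positive coefficient
   at q^(n-1) but a zero one at q^0, because fewer vertices than required can
   get the lowest colour.  Reversing the colours exchanges ascents and
   descents, so a symmetric X is palindromic. *)

Lemma sum_edges n : \sum_(i < n | i.+1 < n) 1 = n.-1.
Proof.
case: n => [|n]; first by rewrite big_ord0.
rewrite big_mkcond big_ord_recr /= ltnn addn0.
rewrite (eq_bigr (fun _ => 1)) => [|i _]; last by rewrite /= ltnS ltn_ord.
by rewrite sum_nat_const card_ord muln1.
Qed.

Section LabeledPath.
Variables (n : nat) (sigma : {perm 'I_n}).
Local Notation lab := (lab sigma).
Local Notation adw := (adw sigma).
Local Notation bx := (bx sigma).
Local Notation by_ := (by_ sigma).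
Local Notation col c i := (colof c (lab i)).

Lemma bxS i : bx i.+1 = bx i + adw i.
Proof. by rewrite /Defs.bx big_ord_recr. Qed.

Lemma byS i : by_ i.+1 = by_ i + ~~ adw i.
Proof. by rewrite /Defs.by_ big_ord_recr. Qed.

Lemma bx_add_by i : bx i + by_ i = i.
Proof.
elim: i => [|i IH]; first by rewrite /Defs.bx /Defs.by_ !big_ord0.
by rewrite bxS byS addnACA IH [adw i + _]addnC addn_negb addn1.
Qed.

Lemma box_succE i j (d : bool) :
  (bx j == bx i + d) && (by_ j == by_ i + ~~ d) = (j == i.+1) && (adw i == d).
Proof.
apply/andP/andP => [[/eqP ex /eqP ey] | [/eqP -> /eqP <-]]; last by rewrite bxS byS.
have ej : j = i.+1.
  by rewrite -(bx_add_by j) ex ey addnACA bx_add_by [d + _]addnC addn_negb addn1.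
split; first by rewrite ej.
by move: ex; rewrite ej bxS => /addnI; case: (adw i); case: (d).
Qed.

Lemma exists_pred_ord (i : 'I_n) (f : nat -> bool) :
  [exists j : 'I_n, (i == j.+1 :> nat) && f j] = (0 < i) && f i.-1.
Proof.
apply/existsP/andP => [[j /andP[/eqP -> ->]] //|[i_gt0 fi]].
have lt_i1_n : i.-1 < n by rewrite (leq_ltn_trans (leq_pred _)).
by exists (Ordinal lt_i1_n); rewrite /= prednK // eqxx fi.
Qed.

Lemma exists_succ_ord (i : 'I_n) (P : bool) :
  [exists j : 'I_n, (j == i.+1 :> nat) && P] = (i.+1 < n) && P.
Proof.
apply/existsP/andP => [[j /andP[/eqP <- ->]] //|[lt_i1_n p]].
by exists (Ordinal lt_i1_n); rewrite /= eqxx p.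
Qed.

Definition corner (b : bool) (i : nat) : bool :=
  ((i == 0) || (adw i.-1 != b)) && ((i.+1 == n) || (adw i == b)).

Lemma is_LU_corner (i : 'I_n) : is_LU sigma i = corner true i.
Proof.
have left (j : 'I_n) : (bx j + 1 == bx i) && (by_ j == by_ i) = (i == j.+1 :> nat) && adw j.
  by rewrite -[adw j]eqb_id -(box_succE j i true) addn0 eq_sym [by_ j == _]eq_sym.
have above (j : 'I_n) : (bx j == bx i) && (by_ j == by_ i + 1) = (j == i.+1 :> nat) && ~~ adw i.
  by rewrite -eqbF_neg -(box_succE i j false) addn0.
rewrite /is_LU /corner (eq_existsb left) (eq_existsb above).
rewrite (exists_pred_ord i adw) exists_succ_ord !negb_and -eqn0Ngt.
rewrite ltn_neqAle ltn_ord andbT negbK.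
by case: (adw i.-1); case: (adw i); rewrite /= ?orbF ?orbT.
Qed.

Lemma is_RL_corner (i : 'I_n) : is_RL sigma i = corner false i.
Proof.
have right (j : 'I_n) : (bx j == bx i + 1) && (by_ j == by_ i) = (j == i.+1 :> nat) && adw i.
  by rewrite -[adw i]eqb_id -(box_succE i j true) addn0.
have below (j : 'I_n) : (bx j == bx i) && (by_ j + 1 == by_ i) = (i == j.+1 :> nat) && ~~ adw j.
  by rewrite -eqbF_neg -(box_succE j i false) addn0 eq_sym [by_ j + _ == _]eq_sym.
rewrite /is_RL /corner (eq_existsb right) (eq_existsb below).
rewrite (exists_pred_ord i (fun j => ~~ adw j)) exists_succ_ord !negb_and -eqn0Ngt.
rewrite ltn_neqAle ltn_ord andbT negbK andbC.
by case: (adw i.-1); case: (adw i); rewrite /= ?orbF ?orbT.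
Qed.

Lemma numLU_corner : numLU sigma = #|[set i : 'I_n | corner true i]|.
Proof. by apply: eq_card => i; rewrite !inE is_LU_corner. Qed.

Lemma numRL_corner : numRL sigma = #|[set i : 'I_n | corner false i]|.
Proof. by apply: eq_card => i; rewrite !inE is_RL_corner. Qed.

Lemma lab_ord (i : 'I_n) : lab i = sigma i.
Proof. by rewrite /Defs.lab valK. Qed.

Lemma lab_neq i : i.+1 < n -> lab i != lab i.+1.
Proof.
move=> lt_i1_n; have lt_i_n := ltnW lt_i1_n.
rewrite (lab_ord (Ordinal lt_i_n)) (lab_ord (Ordinal lt_i1_n)).
by apply/eqP => /val_inj/perm_inj/(congr1 val) /=; lia.
Qed.

Section Colorings.
Variable m : nat.
Implicit Type c : {ffun 'I_n -> 'I_m}.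

Lemma col_ord c (i : 'I_n) : col c i = c (sigma i).
Proof. by rewrite lab_ord /colof valK. Qed.

Lemma col_lt c i : i < n -> col c i < m.
Proof. by move=> lt_i_n; rewrite (col_ord c (Ordinal lt_i_n)). Qed.

Lemma sum_asc_desc c : asc sigma c + \sum_(i < n | i.+1 < n) ~~ asc_edge sigma c i = n.-1.
Proof.
rewrite /asc -big_split -(sum_edges n); apply: eq_bigr => i _.
by case: asc_edge.
Qed.

Lemma asc_le c : asc sigma c <= n.-1.
Proof. by rewrite -(sum_asc_desc c) leq_addr. Qed.

Section ProperColoring.
Variable c : {ffun 'I_n -> 'I_m}.
Hypothesis c_proper : Defs.proper sigma c.

Lemma col_neq i : i.+1 < n -> col c i != col c i.+1.
Proof.
by move=> lt_i1_n; move/forallP/(_ (Ordinal (ltnW lt_i1_n)))/implyP: c_proper; apply.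
Qed.

Lemma asc_edgeE i : i.+1 < n -> asc_edge sigma c i = (adw i == (col c i < col c i.+1)).
Proof.
move=> lt_i1_n; have := col_neq lt_i1_n; have := lab_neq lt_i1_n.
rewrite /asc_edge /Defs.adw.
move: (lab i) (lab i.+1) (col c i) (col c i.+1) => x y u v.
by case: (ltngtP x y); case: (ltngtP u v).
Qed.

Lemma asc_edge_mono (b : bool) :
  asc sigma c = b * n.-1 -> forall i, i.+1 < n -> asc_edge sigma c i = b.
Proof.
move=> asc_eq i lt_i1_n.
have : \sum_(j < n | j.+1 < n) (asc_edge sigma c j != b) = 0.
  case: b asc_eq => asc_eq.
  - under eq_bigr => j _ do rewrite eqb_id.
    by apply/eqP; rewrite -(eqn_add2l (asc sigma c)) sum_asc_desc asc_eq mul1n addn0.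
  - by under eq_bigr => j _ do rewrite eqbF_neg negbK.
move/eqP; rewrite sum_nat_eq0 => /forallP/(_ (Ordinal (ltnW lt_i1_n)))/implyP/(_ lt_i1_n).
by rewrite eqb0 negbK => /eqP.
Qed.

Lemma corner_of_min_col (b : bool) i : asc sigma c = b * n.-1 -> i < n ->
  (forall j, j < n -> col c i <= col c j) -> corner b i.
Proof.
move=> asc_eq lt_i_n col_min.
have dirE j : j.+1 < n -> (col c j < col c j.+1) = (adw j == b).
  move=> lt_j1_n; rewrite -(asc_edge_mono asc_eq lt_j1_n) asc_edgeE //.
  by case: (adw j); case: (_ < _).
apply/andP; split.
  case: i lt_i_n col_min => [|i] // lt_i_n col_min /=.
  by rewrite -dirE // -leqNgt col_min // ltnW.
move: lt_i_n; rewrite leq_eqVlt => /orP[-> //|lt_i1_n].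
by rewrite -dirE // ltn_neqAle col_neq // col_min ?orbT.
Qed.

Lemma card_min_col_le_corner (b : bool) (j0 : 'I_m) :
  asc sigma c = b * n.-1 -> j0 = 0 :> nat ->
  #|[set v | c v == j0]| <= #|[set i : 'I_n | corner b i]|.
Proof.
move=> asc_eq j0_eq0.
rewrite -[X in _ <= X](card_imset _ (@perm_inj _ sigma)).
apply/subset_leq_card/subsetP => v; rewrite inE => /eqP cv.
apply/imsetP; exists (sigma^-1 v)%g; last by rewrite permKV.
rewrite inE; apply: corner_of_min_col => // j _.
by rewrite col_ord permKV cv j0_eq0.
Qed.

End ProperColoring.

Definition rev_coloring c : {ffun 'I_n -> 'I_m} := [ffun v => rev_ord (c v)].

Lemma rev_coloringK : involutive rev_coloring.
Proof. by move=> c; apply/ffunP => v; rewrite !ffunE rev_ordK. Qed.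

Lemma col_rev_coloring c i : i < n -> col (rev_coloring c) i = m - (col c i).+1.
Proof.
move=> lt_i_n.
by rewrite (col_ord _ (Ordinal lt_i_n)) (col_ord c (Ordinal lt_i_n)) ffunE.
Qed.

Lemma proper_rev_coloring c : Defs.proper sigma (rev_coloring c) = Defs.proper sigma c.
Proof.
apply: eq_forallb => i; case: (boolP (i.+1 < n)) => //= lt_i1_n.
rewrite (col_rev_coloring c lt_i1_n) (col_rev_coloring c (ltnW lt_i1_n)).
have := col_lt c lt_i1_n; have := col_lt c (ltnW lt_i1_n).
by move: (col c i) (col c i.+1) => x y ? ?; congr (~~ _); apply/eqP/eqP; lia.
Qed.

Lemma asc_edge_rev_coloring c i : Defs.proper sigma c -> i.+1 < n ->
  asc_edge sigma (rev_coloring c) i = ~~ asc_edge sigma c i.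
Proof.
move=> c_proper lt_i1_n.
rewrite !asc_edgeE ?proper_rev_coloring //.
rewrite (col_rev_coloring c lt_i1_n) (col_rev_coloring c (ltnW lt_i1_n)).
have := col_neq c_proper lt_i1_n; have := col_lt c lt_i1_n; have := col_lt c (ltnW lt_i1_n).
move: (col c i) (col c i.+1) => x y ? ? neq_xy.
have -> : (m - x.+1 < m - y.+1) = ~~ (x < y).
  by rewrite -leqNgt; apply/idP/idP; move: neq_xy => /eqP; lia.
by case: (adw i); case: (x < y).
Qed.

Lemma asc_rev_coloring c : Defs.proper sigma c -> asc sigma (rev_coloring c) = n.-1 - asc sigma c.
Proof.
move=> c_proper; rewrite -(sum_asc_desc c) addKn.
by apply: eq_bigr => i lt_i1_n; rewrite asc_edge_rev_coloring.
Qed.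

Lemma card_rev_coloring_fiber c j :
  #|[set v | rev_coloring c v == j]| = #|[set v | c v == rev_ord j]|.
Proof. by apply: eq_card => v; rewrite !inE ffunE (can2_eq rev_ordK rev_ordK). Qed.

End Colorings.

Lemma nth_rev_ord (s : seq nat) (j : 'I_(size s)) : nth 0 (rev s) (rev_ord j) = nth 0 s j.
Proof. by rewrite nth_rev ?ltn_ord //= subnSK // subKn // ltnW. Qed.

Lemma cqf_coef_rev alpha k : k <= n.-1 ->
  cqf_coef sigma (rev alpha) k = cqf_coef sigma alpha (n.-1 - k).
Proof.
move=> le_k; rewrite /cqf_coef size_rev.
rewrite -[RHS](card_imset _ (can_inj (@rev_coloringK _))).
rewrite (can_imset_pre _ (@rev_coloringK _)).
apply: eq_card => c; rewrite !inE proper_rev_coloring.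
case: (boolP (Defs.proper sigma c)) => //= c_proper.
congr andb.
  apply/forallP/forallP => content j.
    by rewrite card_rev_coloring_fiber -nth_rev_ord content.
  by move: (content (rev_ord j)); rewrite card_rev_coloring_fiber rev_ordK -nth_rev_ord rev_ordK.
rewrite asc_rev_coloring //; have := asc_le c.
by move=> le_asc; apply/eqP/eqP; lia.
Qed.

Lemma cqf_symmetric_palindromic : cqf_symmetric sigma -> cqf_palindromic sigma.
Proof.
move=> sym alpha k le_k.
by rewrite (sym k alpha (rev alpha)) ?cqf_coef_rev // perm_sym perm_rev.
Qed.

Lemma cqf_coef_mono_eq0 (b : bool) alpha : #|[set i : 'I_n | corner b i]| < head 0 alpha ->
  cqf_coef sigma alpha (b * n.-1) = 0.
Proof.
case: alpha => [//|a alpha] /= lt_corner_a.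
apply/eqP; rewrite cards_eq0; apply/eqP/setP => c; rewrite !inE.
apply/negP => /and3P[c_proper /forallP content /eqP asc_eq].
have := card_min_col_le_corner (j0 := ord0) c_proper asc_eq erefl.
by rewrite (eqP (content ord0)) => /leq_ltn_trans/(_ lt_corner_a); rewrite ltnn.
Qed.

(* [height i] adds the length of the maximal run of [b]-letters ending at box
   [i] to that of the maximal run of [~~ b]-letters starting at [i]: it vanishes
   at the [corner b] boxes and increases along edge [i] exactly when
   [adw i == b]. *)
Section HeightColoring.
Variable b : bool.

Fixpoint up_run i : nat := if i is j.+1 then (if adw j == b then (up_run j).+1 else 0) else 0.

Definition down_run i : nat := find (fun j => (n <= j.+1) || (adw j == b)) (iota i (n - i)).

Definition height i : nat := up_run i + down_run i.

Lemma up_run_le i : up_run i <= i.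
Proof. by elim: i => //= i IH; case: ifP. Qed.

Lemma down_run_le i : down_run i <= n - i.
Proof. by rewrite /down_run (leq_trans (find_size _ _)) // size_iota. Qed.

Lemma down_runS i : i.+1 < n -> down_run i = if adw i == b then 0 else (down_run i.+1).+1.
Proof. by move=> lt_i1_n; rewrite [LHS]/down_run -(subnSK (ltnW lt_i1_n)) /= leqNgt lt_i1_n. Qed.

Lemma down_run_last i : i.+1 = n -> down_run i = 0.
Proof. by move=> last_i; rewrite /down_run (_ : n - i = 1) /= ?last_i ?leqnn // -last_i subSnn. Qed.

Lemma height_le i : i <= n -> height i <= n.
Proof. by move=> le_i_n; have := up_run_le i; have := down_run_le i; rewrite /height; lia. Qed.

Lemma height_ltE i : i.+1 < n -> (height i < height i.+1) = (adw i == b).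
Proof.
move=> lt_i1_n; rewrite /height /= (down_runS lt_i1_n).
by case: (adw i == b) => /=; [lia | apply/negbTE; lia].
Qed.

Lemma height_neq i : i.+1 < n -> height i != height i.+1.
Proof.
move=> lt_i1_n; rewrite /height /= (down_runS lt_i1_n).
by case: (adw i == b) => /=; apply/eqP; lia.
Qed.

Lemma height_corner i : i < n -> corner b i -> height i = 0.
Proof.
rewrite /corner /height => lt_i_n /andP[first_i last_i].
have -> : up_run i = 0 by case: i lt_i_n first_i {last_i} => //= i _ /negbTE ->.
move: lt_i_n; rewrite leq_eqVlt => /orP[/eqP/down_run_last -> //|lt_i1_n].
by move: last_i; rewrite (ltn_eqF lt_i1_n) (down_runS lt_i1_n) => /= ->.
Qed.

Definition height_content : seq nat :=
  [seq #|[set v : 'I_n | height (sigma^-1 v)%g == h]| | h <- iota 0 n.+1].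

Lemma size_height_content : size height_content = n.+1.
Proof. by rewrite size_map size_iota. Qed.

Lemma height_lt_size (v : 'I_n) : height (sigma^-1 v)%g < size height_content.
Proof. by rewrite size_height_content ltnS height_le // ltnW. Qed.

Definition height_coloring : {ffun 'I_n -> 'I_(size height_content)} :=
  [ffun v => Ordinal (height_lt_size v)].

Lemma col_height_coloring i : i < n -> col height_coloring i = height i.
Proof. by move=> lt_i_n; rewrite (col_ord _ (Ordinal lt_i_n)) ffunE /= permK. Qed.

Lemma height_coloring_proper : Defs.proper sigma height_coloring.
Proof.
apply/forallP => i; apply/implyP => lt_i1_n.
rewrite (col_height_coloring lt_i1_n) (col_height_coloring (ltnW lt_i1_n)).
exact: height_neq.
Qed.

Lemma asc_height_coloring : asc sigma height_coloring = b * n.-1.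
Proof.
rewrite /asc (eq_bigr (fun _ => nat_of_bool b)) => [|i lt_i1_n].
  by case: b; rewrite ?mul1n ?sum_edges // mul0n big1.
rewrite (asc_edgeE height_coloring_proper lt_i1_n).
rewrite (col_height_coloring lt_i1_n) (col_height_coloring (ltnW lt_i1_n)) height_ltE //.
by case: (adw i); case: b.
Qed.

Lemma height_coloring_content :
  [forall j, #|[set v | height_coloring v == j]| == nth 0 height_content j].
Proof.
apply/forallP => j; have lt_j : j < n.+1 by rewrite -size_height_content.
rewrite /height_content (nth_map 0) ?size_iota // nth_iota // add0n.
by apply/eqP/eq_card => v; rewrite !inE -val_eqE ffunE.
Qed.

Lemma cqf_coef_height_content : 0 < cqf_coef sigma height_content (b * n.-1).
Proof.
rewrite /cqf_coef card_gt0; apply/set0Pn; exists height_coloring.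
by rewrite inE height_coloring_proper height_coloring_content asc_height_coloring eqxx.
Qed.

Lemma corner_le_head_height_content :
  #|[set i : 'I_n | corner b i]| <= head 0 height_content.
Proof.
rewrite -[X in X <= _](card_imset _ (@perm_inj _ sigma)).
apply/subset_leq_card/subsetP => v /imsetP[i]; rewrite inE => corner_i ->.
by rewrite inE permK (height_corner (ltn_ord i) corner_i).
Qed.

End HeightColoring.

End LabeledPath.

Theorem proposition4p2 (n : nat) (sigma : {perm 'I_n}) :
  numLU sigma <> numRL sigma ->
  ~ cqf_palindromic sigma /\ ~ cqf_symmetric sigma.
Proof.
rewrite numLU_corner numRL_corner => ne_corners.
have [b lt_corners] : exists b,
    #|[set i : 'I_n | corner sigma (~~ b) i]| < #|[set i : 'I_n | corner sigma b i]|.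
  case: (ltngtP #|[set i : 'I_n | corner sigma true i]| #|[set i : 'I_n | corner sigma false i]|).
  - by exists false.
  - by exists true.
  - by move/ne_corners.
have not_palindromic : ~ cqf_palindromic sigma.
  move=> /(_ (height_content sigma b) (b * n.-1)) palindromic.
  have := cqf_coef_height_content sigma b.
  rewrite palindromic; last by case: (b); rewrite ?mul1n ?mul0n.
  have -> : n.-1 - b * n.-1 = ~~ b * n.-1 by case: (b); rewrite /= ?mul1n ?mul0n ?subnn ?subn0.
  by rewrite cqf_coef_mono_eq0 // (leq_trans lt_corners) // corner_le_head_height_content.
by split=> // /cqf_symmetric_palindromic.
Qed.
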